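(* Let $H_0,H_1\in\mathbb{C}^{d\times d}$ with $H_0$ invertible, put $P_0=H_0H_0^*+H_1H_1^*$, $P_1=H_0H_1^*$, $P(z)=P_1^*z^{-1}+P_0+P_1z$ (so $P(z)=H(z)H(z)^*$ with $H(z)=H_0+H_1z^{-1}$), $\bar X=H_0H_0^*$ and $A=H_1H_0^{-1}$. Define $g(X)=P_0-P_1^*X^{-1}P_1$ on invertible $d\times d$ matrices. Then: (a) $g(\bar X)=\bar X$, i.e. $\bar X$ solves $X=P_0-P_1^*X^{-1}P_1$, and $H_1=P_1^*H_0^{-*}$; (b) the derivative of $g$ at $\bar X$, written in vectorized form (the matrix $J\in\mathbb{C}^{d^2\times d^2}$ with $\mathrm{vec}(Dg(\bar X)[E])=J\,\mathrm{vec}(E)$ for all $E$), equals $J=\overline{A}\otimes A$; (c) if $\det P(\theta)=0$ for some $\theta\in\mathbb{C}$ with $|\theta|=1$, then $1$ is an eigenvalue of $J$; (d) conversely, if the spectral radius of $A$ is at most $1$ and $1$ is an eigenvalue of $J$, then $\det P(\theta)=0$ for some $|\theta|=1$. Consequently, under $\rho(A)\le 1$, $\det P$ vanishes somewhere on the unit circle iff $\rho(J)=1$ iff the derivative $I-J$ of $f(X)=X-g(X)$ at $\bar X$ is singular.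
   Context: $A^*$ is the conjugate transpose, $\overline{A}$ the entrywise complex conjugate, $A^{-*}=(A^* )^{-1}$, $\otimes$ the Kronecker product, and $\mathrm{vec}$ stacks the columns of a matrix into a vector (so $\mathrm{vec}(ABC)=(C^T\otimes A)\mathrm{vec}(B)$). $\rho(\cdot)$ denotes spectral radius. *)

(* complex numbers are R[i] = complex R for a real closed field R
   (R = Stdlib reals gives the usual complex field C). *)
From HB Require Import structures.
From mathcomp Require Import all_boot all_order all_algebra.
From mathcomp Require Import complex mxtens.
Set Implicit Arguments. Unset Strict Implicit. Unset Printing Implicit Defensive.
Import Order.TTheory GRing.Theory Num.Theory.
Local Open Scope ring_scope.

Section Defs.
Variable R : rcfType.
Local Notation C := R[i].

Definition ctrmx m n (A : 'M[C]_(m, n)) : 'M[C]_(n, m) := map_mx (@conjc R) A^T.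
Definition cconjmx m n (A : 'M[C]_(m, n)) : 'M[C]_(m, n) := map_mx (@conjc R) A.

(* Kronecker product: (A \otimes B) ((i1,i2),(j1,j2)) = A i1 j1 * B i2 j2, with
   the standard index (i1,i2) |-> i1 * p + i2 (mathcomp-real-closed's tensmx). *)
Definition kron m n p q (A : 'M[C]_(m, n)) (B : 'M[C]_(p, q)) : 'M[C]_(m * p, n * q) :=
  tensmx A B.

(* vec: stacks the columns; entry of index j * m + i is A i j, so that
   vec (A X B) = (B^T \otimes A) vec X. *)
Definition vec m n (A : 'M[C]_(m, n)) : 'cV[C]_(n * m) :=
  \col_k A (mxtens_unindex k).2 (mxtens_unindex k).1.

(* entrywise l1 norm on matrices (all norms are equivalent in finite dimension) *)
Definition mxnorm m n (E : 'M[C]_(m, n)) : C := \sum_i \sum_j `|E i j|.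

Definition frechet_deriv m n p q (g : 'M[C]_(m, n) -> 'M[C]_(p, q)) (X : 'M[C]_(m, n))
  (L : 'M[C]_(m, n) -> 'M[C]_(p, q)) : Prop :=
  (forall a E1 E2, L (a *: E1 + E2) = a *: L E1 + L E2) /\
  forall eps : C, 0 < eps -> exists2 delta : C, 0 < delta &
    forall E, mxnorm E < delta ->
      mxnorm (g (X + E) - g X - L E) <= eps * mxnorm E.

Definition spec_rad_le n (A : 'M[C]_n) (r : R) : Prop :=
  forall l, eigenvalue A l -> `|l| <= (r%:C)%C.

Definition spec_rad_eq n (A : 'M[C]_n) (r : R) : Prop :=
  spec_rad_le A r /\ exists2 l, eigenvalue A l & `|l| = (r%:C)%C.

End Defs.

From HB Require Import structures.
From mathcomp Require Import all_boot all_order all_algebra.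
From mathcomp Require Import complex mxtens ring.
Set Implicit Arguments. Unset Strict Implicit. Unset Printing Implicit Defensive.
Import Order.TTheory GRing.Theory Num.Theory.
Local Open Scope ring_scope.

(* Write [T E = A E A^*], so that [vec (T E) = J vec E] and [J] and [T] have the
   same eigenvalues.  For [|t| = 1] the Laurent polynomial factors as
   [P t = H(t) H(t)^*] with [H(t) = (1 + t^-1 A) H0], so [det P] vanishes on the
   unit circle iff [A] has a unimodular eigenvalue [nu]; an eigenvector [x] then
   gives [T (x x^* ) = x x^*].  Conversely, if [T E = l E] with [E, l != 0], the
   Cayley-Hamilton theorem makes the characteristic polynomial of [A] share a
   root with a twisted reciprocal of itself, which forces [l = nu * conj mu] for
   eigenvalues [mu, nu] of [A]; when [rho(A) <= 1] this gives
   [|l| <= |nu| <= 1].  Finally [g] is differentiable at [Xbar] because the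
   resolvent identity leaves a remainder quadratic in [E]. *)

Section KernelEigen.
Variable F : fieldType.

Lemma unitmxPn n (M : 'M[F]_n) :
  reflect (exists2 x : 'cV_n, x != 0 & M *m x = 0) (M \notin unitmx).
Proof.
rewrite unitmxE unitfE negbK -det_tr.
apply: (iffP det0P) => [[v nz_v vM0] | [x nz_x Mx0]].
  by exists v^T; rewrite ?trmx_eq0 // -[M]trmxK -trmx_mul vM0 trmx0.
by exists x^T; rewrite ?trmx_eq0 // -trmx_mul Mx0 trmx0.
Qed.

Lemma eigenvalue_unitmx n (M : 'M[F]_n) a :
  eigenvalue M a = (M - a%:M \notin unitmx).
Proof. by rewrite /eigenvalue /eigenspace kermx_eq0 row_free_unit. Qed.

Lemma eigenvalue_colP n (M : 'M[F]_n) a :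
  reflect (exists2 x : 'cV_n, x != 0 & M *m x = a *: x) (eigenvalue M a).
Proof.
rewrite eigenvalue_unitmx; apply: (iffP (unitmxPn _)) => -[x nz_x hx]; exists x => //.
  by apply/eqP; rewrite -subr_eq0 -mul_scalar_mx -mulmxBl hx.
by rewrite mulmxBl mul_scalar_mx hx subrr.
Qed.

Lemma eigenvalue1_unitmx n (M : 'M[F]_n) : eigenvalue M 1 = (1%:M - M \notin unitmx).
Proof.
rewrite eigenvalue_unitmx -opprB -scaleN1r unitmxZ //.
by rewrite unitrN unitr1.
Qed.

Lemma invmxM n (X Y : 'M[F]_n) : X \in unitmx -> Y \in unitmx ->
  invmx (X *m Y) = invmx Y *m invmx X.
Proof.
move=> uX uY; have uXY : X *m Y \in unitmx by rewrite unitmx_mul uX uY.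
have inv_XY : X *m Y *m (invmx Y *m invmx X) = 1%:M.
  by rewrite mulmxA -(mulmxA X) mulmxV // mulmx1 mulmxV.
by rewrite -[RHS](mulKmx uXY) inv_XY mulmx1.
Qed.

Lemma resolvent_identity n (X Y : 'M[F]_n) :
  X \in unitmx -> Y \in unitmx ->
  invmx Y - invmx X = invmx Y *m (X - Y) *m invmx X.
Proof.
move=> uX uY; rewrite mulmxBr mulmxBl mulVmx // mul1mx.
by rewrite -mulmxA mulmxV // mulmx1.
Qed.

End KernelEigen.

Section ConjTranspose.
Variable R : rcfType.
Local Notation C := R[i].
Local Notation cj := (@conjc R).

Lemma ctrmxE m n (A : 'M[C]_(m, n)) i j : ctrmx A i j = cj (A j i).
Proof. by rewrite !mxE. Qed.

Lemma ctrmxK m n (A : 'M[C]_(m, n)) : ctrmx (ctrmx A) = A.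
Proof. by apply/matrixP=> i j; rewrite !ctrmxE conjcK. Qed.

Lemma ctrmxM m n p (A : 'M[C]_(m, n)) (B : 'M[C]_(n, p)) :
  ctrmx (A *m B) = ctrmx B *m ctrmx A.
Proof. by rewrite /ctrmx trmx_mul map_mxM. Qed.

Lemma ctrmxD m n (A B : 'M[C]_(m, n)) : ctrmx (A + B) = ctrmx A + ctrmx B.
Proof. by apply/matrixP=> i j; rewrite !mxE rmorphD. Qed.

Lemma ctrmxZ m n a (A : 'M[C]_(m, n)) : ctrmx (a *: A) = cj a *: ctrmx A.
Proof. by apply/matrixP=> i j; rewrite !mxE rmorphM. Qed.

Lemma ctrmx0 m n : ctrmx (0 : 'M[C]_(m, n)) = 0.
Proof. by apply/matrixP=> i j; rewrite !mxE conjc0. Qed.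

Lemma ctrmx1 n : ctrmx (1%:M : 'M[C]_n) = 1%:M.
Proof. by rewrite /ctrmx trmx1 map_scalar_mx rmorph1. Qed.

Lemma ctrmx_sum m n I (r : seq I) (P : pred I) (F : I -> 'M[C]_(m, n)) :
  ctrmx (\sum_(i <- r | P i) F i) = \sum_(i <- r | P i) ctrmx (F i).
Proof. exact: (big_morph _ (@ctrmxD m n) (@ctrmx0 m n)). Qed.

Lemma ctrmxX n (A : 'M[C]_n.+1) k : ctrmx (A ^+ k) = ctrmx A ^+ k.
Proof.
elim: k => [|k IHk]; first by rewrite !expr0 ctrmx1.
by rewrite exprS exprSr -!mulmxE ctrmxM IHk.
Qed.

Lemma det_ctrmx n (A : 'M[C]_n) : \det (ctrmx A) = cj (\det A).
Proof. by rewrite /ctrmx det_map_mx det_tr. Qed.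

Lemma unitmx_ctrmx n (A : 'M[C]_n) : (ctrmx A \in unitmx) = (A \in unitmx).
Proof. by rewrite !unitmxE !unitfE det_ctrmx conjc_eq0. Qed.

Lemma ctrmx_inv n (A : 'M[C]_n) : ctrmx (invmx A) = invmx (ctrmx A).
Proof. by rewrite /ctrmx trmx_inv map_invmx. Qed.

Lemma mulmx_ctrmx_eq0 n (x : 'cV[C]_n) : (x *m ctrmx x == 0) = (x == 0).
Proof.
apply/idP/idP => [|/eqP->]; last by rewrite mul0mx.
apply: contraLR => /matrix0Pn [i [j]]; rewrite [j]ord1 => nz_xi.
apply/matrix0Pn; exists i, i; rewrite mxE big_ord1 ctrmxE -sqr_normc.
by rewrite expf_neq0 // normr_eq0.
Qed.

End ConjTranspose.

Section Vectorization.
Variable R : rcfType.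
Local Notation C := R[i].
Local Notation cj := (@conjc R).

Lemma vecE m n (E : 'M[C]_(m, n)) i j : vec E (mxtens_index (j, i)) 0 = E i j.
Proof. by rewrite /vec mxE mxtens_indexK. Qed.

Lemma vec_inj m n : injective (@vec R m n).
Proof. by move=> E F h; apply/matrixP=> i j; rewrite -[E i j]vecE -[F i j]vecE h. Qed.

Lemma vec_surj m n (x : 'cV[C]_(n * m)) : exists E : 'M[C]_(m, n), vec E = x.
Proof.
exists (\matrix_(i, j) x (mxtens_index (j, i)) 0).
apply/matrixP=> k l; rewrite ord1 /vec !mxE.
by rewrite -surjective_pairing mxtens_unindexK.
Qed.

Lemma vecZ m n a (E : 'M[C]_(m, n)) : vec (a *: E) = a *: vec E.
Proof. by apply/matrixP=> k l; rewrite !mxE. Qed.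

Lemma vec_eq0 m n (E : 'M[C]_(m, n)) : (vec E == 0) = (E == 0).
Proof.
have vec0 : vec (0 : 'M[C]_(m, n)) = 0 by rewrite -(scale0r 0) vecZ !scale0r.
by rewrite -vec0 (inj_eq (@vec_inj m n)).
Qed.

Lemma big_mxtens_index m n (F : 'I_(m * n) -> C) :
  \sum_k F k = \sum_(a < m) \sum_(b < n) F (mxtens_index (a, b)).
Proof.
rewrite pair_big (reindex (@mxtens_index m n)) /=; first by apply: eq_bigr => -[].
by exists (@mxtens_unindex m n) => ? _; [apply: mxtens_indexK | apply: mxtens_unindexK].
Qed.

Lemma kron_conj_vec d (A E : 'M[C]_d) :
  kron (cconjmx A) A *m vec E = vec (A *m E *m ctrmx A).
Proof.
apply/matrixP=> k l; rewrite ord1; case: (mxtens_indexP k) => c r.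
rewrite vecE !mxE big_mxtens_index; apply: eq_bigr => a _.
rewrite mxE big_distrl /=; apply: eq_bigr => b _.
by rewrite /kron tensmxE vecE !mxE [RHS]mulrC mulrA.
Qed.

Lemma eigenvalue_kron_conjP d (A : 'M[C]_d) l :
  reflect (exists2 E : 'M_d, E != 0 & A *m E *m ctrmx A = l *: E)
          (eigenvalue (kron (cconjmx A) A) l).
Proof.
apply: (iffP (eigenvalue_colP _ _)) => [[x nz_x hx] | [E nz_E hE]].
  have [E vecE_x] := vec_surj x; exists E; first by rewrite -vec_eq0 vecE_x.
  by apply: vec_inj; rewrite -kron_conj_vec vecZ vecE_x.
by exists (vec E); rewrite ?vec_eq0 // kron_conj_vec hE vecZ.
Qed.

End Vectorization.

Lemma horner_mx_annihilator (F : closedFieldType) n m (A : 'M[F]_n.+1)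
    (q : {poly F}) (M : 'M[F]_(n.+1, m)) :
  M != 0 -> horner_mx A q *m M = 0 -> exists2 mu, root (char_poly A) mu & root q mu.
Proof.
move=> nz_M qM0; have : ~~ coprimep (char_poly A) q.
  apply/negP => /Bezout_eq1_coprimepP [[u v] /= huv]; move/eqP: nz_M; apply.
  have := congr1 (fun P => horner_mx A P *m M) huv; rewrite /= rmorph1 mul1mx => <-.
  by rewrite rmorphD !rmorphM /= Cayley_Hamilton mulr0 add0r -mulmxE -mulmxA qM0 mulmx0.
rewrite coprimep_def => /closed_rootP [mu]; rewrite root_gcd => /andP[].
by exists mu.
Qed.

Section Sandwich.
Variable R : rcfType.
Local Notation C := R[i].
Local Notation cj := (@conjc R).

(* [r.[x] = x ^+ N * cj p.[l / cj x]] for [x != 0], where [N = (size p).-1]. *)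
Definition twisted_reciprocal (p : {poly C}) (l : C) : {poly C} :=
  \sum_(k < size p) cj (p`_k * l ^+ k) *: 'X^((size p).-1 - k).

Lemma horner_twisted_reciprocal p l x : x != 0 ->
  cj (twisted_reciprocal p l).[x] = cj x ^+ (size p).-1 * p.[l / cj x].
Proof.
move=> nz_x; have nz_cx : cj x != 0 by rewrite conjc_eq0.
rewrite horner_sum rmorph_sum horner_coef mulr_sumr; apply: eq_bigr => k _.
rewrite hornerZ hornerXn rmorphM /= conjcK rmorphXn /=.
have le_kN : (k <= (size p).-1)%N by rewrite -ltnS (leq_trans (ltn_ord k)) ?leqSpred.
rewrite -(subnKC le_kN) exprD addKn -{1}(divfK nz_cx l) exprMn; ring.
Qed.

Lemma horner0_twisted_reciprocal p l :
  (twisted_reciprocal p l).[0] = cj (lead_coef p * l ^+ (size p).-1).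
Proof.
rewrite horner_sum lead_coefE; case sz_p: (size p) => [|N] /=.
  by rewrite big_ord0 nth_default ?sz_p // mul0r conjc0.
rewrite big_ord_recr /= subnn hornerZ hornerXn expr0 mulr1 big1 ?add0r // => k _.
by rewrite hornerZ hornerXn expr0n subn_eq0 leqNgt ltn_ord mulr0.
Qed.

Lemma sandwich_expr n (A E : 'M[C]_n.+1) l k : A *m E *m ctrmx A = l *: E ->
  A ^+ k *m E *m ctrmx A ^+ k = l ^+ k *: E.
Proof.
move=> hE; elim: k => [|k IHk]; first by rewrite !expr0 mul1mx mulmx1 scale1r.
rewrite exprS exprSr -!mulmxE !mulmxA -(mulmxA A) -(mulmxA A) IHk.
by rewrite -scalemxAr -scalemxAl hE scalerA exprSr.
Qed.

Lemma horner_mx_twisted_reciprocal n (A E : 'M[C]_n.+1) l p :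
  A *m E *m ctrmx A = l *: E ->
  horner_mx A (twisted_reciprocal p l) *m ctrmx E
    = ctrmx (horner_mx A p *m E *m ctrmx A ^+ (size p).-1).
Proof.
move=> hE; have -> : horner_mx A p = \sum_(k < size p) horner_mx A (p`_k *: 'X^k).
  by rewrite -rmorph_sum -poly_def coefK.
rewrite !mulmx_suml ctrmx_sum rmorph_sum mulmx_suml; apply: eq_bigr => k _.
have le_kN : (k <= (size p).-1)%N by rewrite -ltnS (leq_trans (ltn_ord k)) ?leqSpred.
rewrite -{2}(subnKC le_kN) exprD -mulmxE mulmxA.
rewrite !horner_mxZ !rmorphXn /= !horner_mx_X -!scalemxAl (sandwich_expr _ hE).
rewrite -scalemxAl scalerA (horner_mxZ A) rmorphXn /= horner_mx_X.
by rewrite ctrmxZ ctrmxM ctrmxX ctrmxK -scalemxAl.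
Qed.

Lemma sandwich_eigenvalue_factor n (A E : 'M[C]_n.+1) l :
  l != 0 -> E != 0 -> A *m E *m ctrmx A = l *: E ->
  exists mu nu, [/\ eigenvalue A mu, eigenvalue A nu & l = nu * cj mu].
Proof.
move=> nz_l nz_E hE; set p := char_poly A.
have nz_cE : ctrmx E != 0 by apply: contraNneq nz_E => h; rewrite -[E]ctrmxK h ctrmx0.
have rE0 : horner_mx A (twisted_reciprocal p l) *m ctrmx E = 0.
  by rewrite horner_mx_twisted_reciprocal // Cayley_Hamilton !mul0mx ctrmx0.
have [mu p_mu r_mu] := horner_mx_annihilator nz_cE rE0.
have nz_mu : mu != 0.
  apply: contraTneq r_mu => ->; rewrite /root horner0_twisted_reciprocal.
  have /monicP -> := char_poly_monic A.
  by rewrite mul1r conjc_eq0 expf_neq0.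
have nz_cmu : cj mu != 0 by rewrite conjc_eq0.
exists mu, (l / cj mu); rewrite !eigenvalue_root_char divfK //; split => //.
move/eqP: r_mu => /(congr1 cj); rewrite horner_twisted_reciprocal // conjc0.
by move/eqP; rewrite mulf_eq0 expf_eq0 (negbTE nz_cmu) andbF.
Qed.

Lemma sandwich_eigenvalue_bound n (A E : 'M[C]_n) l :
  spec_rad_le A 1 -> l != 0 -> E != 0 -> A *m E *m ctrmx A = l *: E ->
  exists2 nu, eigenvalue A nu & `|l| <= `|nu| <= 1.
Proof.
case: n A E => [|n] A E rhoA nz_l nz_E hE; first by rewrite [E]flatmx0 eqxx in nz_E.
have [mu [nu [A_mu A_nu ->]]] := sandwich_eigenvalue_factor nz_l nz_E hE.
exists nu; rewrite // normrM normcJ rhoA // andbT.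
by rewrite ler_piMr // rhoA.
Qed.

End Sandwich.

Section KronSpectrum.
Variables (R : rcfType) (d : nat) (A : 'M[R[i]]_d).
Local Notation J := (kron (cconjmx A) A).

Lemma eigenvalue_kron_conj1 nu : eigenvalue A nu -> `|nu| = 1 -> eigenvalue J 1.
Proof.
move=> /eigenvalue_colP [x nz_x Ax] norm_nu; apply/eigenvalue_kron_conjP.
exists (x *m ctrmx x); first by rewrite mulmx_ctrmx_eq0.
rewrite mulmxA -mulmxA -ctrmxM Ax ctrmxZ -scalemxAr -scalemxAl scalerA.
by rewrite mulrC -sqr_normc norm_nu expr1n scale1r.
Qed.

Hypothesis rhoA : spec_rad_le A 1.

Lemma spec_rad_le_kron_conj : spec_rad_le J 1.
Proof.
move=> l /eigenvalue_kron_conjP [E nz_E hE].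
have [->|nz_l] := eqVneq l 0; first by rewrite normr0 ler01.
have [nu _ /andP [le_l_nu le_nu1]] := sandwich_eigenvalue_bound rhoA nz_l nz_E hE.
exact: le_trans le_nu1.
Qed.

Lemma kron_conj_unimodular_eigenvalue l : eigenvalue J l -> `|l| = 1 ->
  exists2 nu, eigenvalue A nu & `|nu| = 1.
Proof.
move=> /eigenvalue_kron_conjP [E nz_E hE] norm_l.
have nz_l : l != 0 by rewrite -normr_eq0 norm_l oner_eq0.
have [nu A_nu /andP [le_l_nu le_nu1]] := sandwich_eigenvalue_bound rhoA nz_l nz_E hE.
by exists nu => //; apply/eqP; rewrite eq_le le_nu1 -norm_l.
Qed.

End KronSpectrum.

Section UnitCircle.
Variable R : rcfType.
Local Notation C := R[i].
Local Notation cj := (@conjc R).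

Lemma det_scale_add1_eq0 n (A : 'M[C]_n) t : t != 0 ->
  (\det (1%:M + t^-1 *: A) == 0) = eigenvalue A (- t).
Proof.
move=> nz_t; rewrite eigenvalue_unitmx unitmxE unitfE negbK.
have -> : 1%:M + t^-1 *: A = t^-1 *: (A - (- t)%:M).
  by rewrite scalerBr scale_scalar_mx mulrN mulVf // raddfN /= opprK addrC.
by rewrite detZ mulf_eq0 expf_eq0 invr_eq0 (negbTE nz_t) andbF.
Qed.

Lemma conjc_unimodular (t : C) : `|t| = 1 -> cj t = t^-1.
Proof.
move=> norm_t; have nz_t : t != 0 by rewrite -normr_eq0 norm_t oner_eq0.
by apply: (mulfI nz_t); rewrite -sqr_normc norm_t expr1n mulfV.
Qed.

Lemma laurent_spectral_factor d (H0 H1 : 'M[C]_d) t : `|t| = 1 ->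
  t^-1 *: ctrmx (H0 *m ctrmx H1) + (H0 *m ctrmx H0 + H1 *m ctrmx H1)
    + t *: (H0 *m ctrmx H1)
  = (H0 + t^-1 *: H1) *m ctrmx (H0 + t^-1 *: H1).
Proof.
move=> norm_t; have nz_t : t != 0 by rewrite -normr_eq0 norm_t oner_eq0.
have cj_tV : cj t^-1 = t by rewrite conjc_inv conjc_unimodular // invrK.
rewrite ctrmxD ctrmxZ cj_tV !mulmxDl !mulmxDr ctrmxM ctrmxK.
rewrite -!scalemxAl -!scalemxAr scalerA mulVf // scale1r.
by rewrite addrCA addrAC.
Qed.

Lemma det_laurent_eq0 d (H0 H1 : 'M[C]_d) t : H0 \in unitmx -> `|t| = 1 ->
  (\det (t^-1 *: ctrmx (H0 *m ctrmx H1) + (H0 *m ctrmx H0 + H1 *m ctrmx H1)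
    + t *: (H0 *m ctrmx H1)) == 0) = eigenvalue (H1 *m invmx H0) (- t).
Proof.
move=> uH0 norm_t; have nz_t : t != 0 by rewrite -normr_eq0 norm_t oner_eq0.
have nz_detH0 : \det H0 != 0 by rewrite -unitfE -unitmxE.
have H_factor : H0 + t^-1 *: H1 = (1%:M + t^-1 *: (H1 *m invmx H0)) *m H0.
  by rewrite mulmxDl mul1mx -scalemxAl mulmxKV.
rewrite laurent_spectral_factor // det_mulmx det_ctrmx mulf_eq0 conjc_eq0 orbb.
by rewrite H_factor det_mulmx mulf_eq0 (negbTE nz_detH0) orbF det_scale_add1_eq0.
Qed.

End UnitCircle.

Lemma le_twice_of_contraction (F : numDomainType) (x b w : F) :
  0 <= x -> 2 * w <= 1 -> x <= b + w * x -> x <= 2 * b.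
Proof.
move=> x_ge0 le_2w1 le_x.
have : 2 * x <= 2 * b + x.
  apply: (le_trans (y := 2 * b + (2 * w) * x)); first by rewrite -mulrA -mulrDr ler_wpM2l.
  by rewrite lerD2l -{2}(mul1r x) ler_wpM2r.
by rewrite mulr_natl mulr2n lerD2r.
Qed.

Section MatrixNorm.
Variable R : rcfType.
Local Notation C := R[i].

Lemma mxnorm0 m n : mxnorm (0 : 'M[C]_(m, n)) = 0.
Proof. by rewrite /mxnorm big1 // => i _; rewrite big1 // => j _; rewrite mxE normr0. Qed.

Lemma mxnorm_ge0 m n (E : 'M[C]_(m, n)) : 0 <= mxnorm E.
Proof. by apply: sumr_ge0 => i _; apply: sumr_ge0. Qed.

Lemma mxnorm_eq0 m n (E : 'M[C]_(m, n)) : mxnorm E = 0 -> E = 0.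
Proof.
move=> E0; apply/matrixP=> i j; rewrite mxE; apply/eqP; rewrite -normr_eq0; apply/eqP.
have row_i0 : \sum_j0 `|E i j0| = 0.
  by apply: (psumr_eq0P _ E0) => // k _; apply: sumr_ge0.
exact: (psumr_eq0P _ row_i0).
Qed.

Lemma mxnormD m n (E F : 'M[C]_(m, n)) : mxnorm (E + F) <= mxnorm E + mxnorm F.
Proof.
rewrite /mxnorm -big_split /=; apply: ler_sum => i _.
rewrite -big_split /=; apply: ler_sum => j _; rewrite mxE; exact: ler_normD.
Qed.

Lemma mxnormN m n (E : 'M[C]_(m, n)) : mxnorm (- E) = mxnorm E.
Proof. by apply: eq_bigr => i _; apply: eq_bigr => j _; rewrite mxE normrN. Qed.

Lemma mxnormM m n p (M : 'M[C]_(m, n)) (N : 'M[C]_(n, p)) :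
  mxnorm (M *m N) <= mxnorm M * mxnorm N.
Proof.
apply: (le_trans (y := \sum_i \sum_k `|M i k| * \sum_j `|N k j|)).
  apply: ler_sum => i _.
  apply: (le_trans (y := \sum_j \sum_k `|M i k| * `|N k j|)).
    apply: ler_sum => j _; rewrite mxE (le_trans (ler_norm_sum _ _ _)) //.
    by apply: ler_sum => k _; rewrite normrM.
  by rewrite exchange_big /=; apply: ler_sum => k _; rewrite mulr_sumr.
rewrite /mxnorm mulr_suml; apply: ler_sum => i _; rewrite mulr_suml.
apply: ler_sum => k _; apply: ler_wpM2l => //.
by rewrite [leRHS](bigD1 k) //= lerDl; apply: sumr_ge0 => k' _; apply: sumr_ge0.
Qed.

Lemma mxnormM_le m n p (M : 'M[C]_(m, n)) (N : 'M[C]_(n, p)) a b :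
  mxnorm M <= a -> mxnorm N <= b -> mxnorm (M *m N) <= a * b.
Proof. by move=> le_Ma le_Nb; rewrite (le_trans (mxnormM _ _)) // ler_pM ?mxnorm_ge0. Qed.

Lemma mxnorm_contraction_sol n m (W : 'M[C]_n) (Z B : 'M[C]_(n, m)) :
  2 * mxnorm W <= 1 -> Z + W *m Z = B -> mxnorm Z <= 2 * mxnorm B.
Proof.
move=> small_W ZB; have eZ : Z = B - W *m Z by rewrite -ZB addrK.
apply: le_twice_of_contraction (mxnorm_ge0 _) small_W _.
by rewrite {1}eZ (le_trans (mxnormD _ _)) // mxnormN lerD2l mxnormM.
Qed.

Lemma unitmx_add1_small n (W : 'M[C]_n) : 2 * mxnorm W <= 1 ->
  1%:M + W \in unitmx /\ mxnorm (invmx (1%:M + W)) <= 2 * mxnorm (1%:M : 'M[C]_n).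
Proof.
move=> small_W; have uW : 1%:M + W \in unitmx.
  have [//|/unitmxPn [x nz_x Wx0]] := boolP (1%:M + W \in unitmx).
  case/eqP: nz_x; apply: mxnorm_eq0; apply/eqP; rewrite eq_le mxnorm_ge0 andbT.
  rewrite -(mulr0 2) -(mxnorm0 n 1); apply: mxnorm_contraction_sol small_W _.
  by rewrite -[X in X + _]mul1mx -mulmxDl Wx0.
split=> //; apply: mxnorm_contraction_sol small_W _.
by rewrite -[X in X + _]mul1mx -mulmxDl mulmxV.
Qed.

End MatrixNorm.

Section Derivative.
Variable R : rcfType.
Local Notation C := R[i].

Lemma invmx_perturbation n (X E : 'M[C]_n) : X \in unitmx ->
  2 * mxnorm (invmx X) * mxnorm E <= 1 ->
  X + E \in unitmx /\
  mxnorm (invmx (X + E)) <= 2 * mxnorm (1%:M : 'M[C]_n) * mxnorm (invmx X).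
Proof.
move=> uX small_E; set W := invmx X *m E.
have small_W : 2 * mxnorm W <= 1.
  by rewrite (le_trans _ small_E) // -mulrA ler_wpM2l // mxnormM.
have [uW le_invW] := unitmx_add1_small small_W.
have XE : X + E = X *m (1%:M + W) by rewrite mulmxDr mulmx1 mulKVmx.
have uXE : X + E \in unitmx by rewrite XE unitmx_mul uX.
split=> //; rewrite XE invmxM //.
exact: mxnormM_le.
Qed.

Lemma frechet_deriv_quadratic m n p q (g : 'M[C]_(m, n) -> 'M[C]_(p, q)) X L
    (r M : C) :
  (forall a E1 E2, L (a *: E1 + E2) = a *: L E1 + L E2) -> 0 < r -> 0 <= M ->
  (forall E, mxnorm E < r -> mxnorm (g (X + E) - g X - L E) <= M * mxnorm E ^+ 2) ->
  frechet_deriv g X L.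
Proof.
move=> linL r_gt0 M_ge0 quadratic; split=> // eps eps_gt0.
have c_gt0 : 0 < r^-1 + (M + 1) / eps.
  by rewrite ltr_wpDr ?invr_gt0 // divr_ge0 // ?addr_ge0 // ltW.
exists (r^-1 + (M + 1) / eps)^-1 => [|E]; first by rewrite invr_gt0.
set e := mxnorm E; have e_ge0 : 0 <= e by apply: mxnorm_ge0.
rewrite -(ltr_pM2r c_gt0) mulVf ?gt_eqF // mulrDr => small_E.
have term1 : 0 <= e * r^-1 by rewrite mulr_ge0 // ltW ?invr_gt0.
have term2 : 0 <= e * ((M + 1) / eps) by rewrite !mulr_ge0 ?invr_ge0 ?addr_ge0 // ltW.
have e_lt_r : e < r.
  have rV_gt0 : 0 < r^-1 by rewrite invr_gt0.
  by rewrite -(ltr_pM2r rV_gt0) mulfV ?gt_eqF // (le_lt_trans _ small_E) // lerDl.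
have Me_le_eps : M * e <= eps.
  have : e * ((M + 1) / eps) <= 1 by rewrite ltW // (le_lt_trans _ small_E) // lerDr.
  rewrite mulrA ler_pdivrMr // mul1r; apply: le_trans.
  by rewrite mulrC ler_wpM2l // lerDl.
apply: (le_trans (quadratic E e_lt_r)).
by rewrite expr2 mulrA ler_wpM2r.
Qed.

Lemma frechet_deriv_invmx_sandwich d (X Q1 Q2 P0 : 'M[C]_d) : X \in unitmx ->
  frechet_deriv (fun Y => P0 - Q1 *m invmx Y *m Q2) X
    (fun E => Q1 *m invmx X *m E *m invmx X *m Q2).
Proof.
move=> uX; set K := mxnorm (invmx X); have K_ge0 : 0 <= K by apply: mxnorm_ge0.
set K' := 2 * mxnorm (1%:M : 'M[C]_d) * K.
apply: (frechet_deriv_quadratic (r := (2 * K + 1)^-1)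
          (M := mxnorm Q1 * K' * K * K * mxnorm Q2)).
- by move=> a E1 E2; rewrite mulmxDr !mulmxDl -scalemxAr -!scalemxAl.
- by rewrite invr_gt0 ltr_wpDl ?mulr_ge0.
- by rewrite !mulr_ge0 ?mxnorm_ge0.
move=> E small_E; set e := mxnorm E.
have [uXE le_invXE] : X + E \in unitmx /\ mxnorm (invmx (X + E)) <= K'.
  have lt1 : (2 * K + 1) * e < 1.
    by rewrite mulrC -ltr_pdivlMr ?div1r // ltr_wpDl ?mulr_ge0.
  apply: invmx_perturbation => //; rewrite ltW // (le_lt_trans _ lt1) //.
  by rewrite ler_wpM2r ?mxnorm_ge0 // lerDl.
have -> : P0 - Q1 *m invmx (X + E) *m Q2 - (P0 - Q1 *m invmx X *m Q2)
            - Q1 *m invmx X *m E *m invmx X *m Q2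
          = - (Q1 *m invmx (X + E) *m E *m invmx X *m E *m invmx X *m Q2).
  have resolvent : invmx X - invmx (X + E) = invmx (X + E) *m E *m invmx X.
    by rewrite -opprB resolvent_identity // opprD addNKr mulmxN mulNmx opprK.
  rewrite opprB [_ + (_ - P0)]addrC addrA subrK -mulmxBl -mulmxBr resolvent.
  rewrite !mulmxA -!mulmxBl -mulmxBr -opprB resolvent.
  by rewrite mulmxN !mulNmx !mulmxA.
rewrite mxnormN.
have -> : mxnorm Q1 * K' * K * K * mxnorm Q2 * e ^+ 2
          = mxnorm Q1 * K' * e * K * e * K * mxnorm Q2 by ring.
by do 6 apply: mxnormM_le => //.
Qed.

End Derivative.

Unset Implicit Arguments.

Theorem mainTheorem3 (R : rcfType) (d : nat) (H0 H1 : 'M[R[i]]_d) :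
  H0 \in unitmx ->
  let P0 := H0 *m ctrmx H0 + H1 *m ctrmx H1 in
  let P1 := H0 *m ctrmx H1 in
  let P := fun z : R[i] => z^-1 *: ctrmx P1 + P0 + z *: P1 in
  let Xbar := H0 *m ctrmx H0 in
  let A := H1 *m invmx H0 in
  let g := fun X : 'M[R[i]]_d => P0 - ctrmx P1 *m invmx X *m P1 in
  let J := kron (cconjmx A) A in
  let detP_vanishes_on_circle := exists theta : R[i], `|theta| = 1 /\ \det (P theta) = 0 in
  [/\ (* (a) *) g Xbar = Xbar /\ H1 = ctrmx P1 *m invmx (ctrmx H0),
      (* (b) *) exists Dg : 'M[R[i]]_d -> 'M[R[i]]_d,
                  frechet_deriv g Xbar Dg /\ (forall E, vec (Dg E) = J *m vec E),
      (* (c) *) detP_vanishes_on_circle -> eigenvalue J 1,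
      (* (d) *) spec_rad_le A 1 -> eigenvalue J 1 -> detP_vanishes_on_circle
    & (* consequence *)
      spec_rad_le A 1 ->
        (detP_vanishes_on_circle <-> spec_rad_eq J 1) /\
        (spec_rad_eq J 1 <-> (1%:M - J) \notin unitmx)].
Proof.
move=> uH0 P0 P1 P Xbar A g J detP0.
have uXbar : Xbar \in unitmx by rewrite unitmx_mul uH0 unitmx_ctrmx.
have P1_Xbar : ctrmx P1 *m invmx Xbar = A.
  rewrite ctrmxM ctrmxK invmxM ?unitmx_ctrmx //.
  by rewrite mulmxA mulmxK ?unitmx_ctrmx.
have Xbar_P1 : invmx Xbar *m P1 = ctrmx A.
  by rewrite invmxM ?unitmx_ctrmx // -mulmxA mulKmx // ctrmxM ctrmx_inv.
have circle : detP0 <-> exists2 nu, eigenvalue A nu & `|nu| = 1.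
  split=> [[t [norm_t /eqP]] | [nu A_nu norm_nu]].
    by rewrite det_laurent_eq0 // => A_t; exists (- t); rewrite ?normrN.
  exists (- nu); rewrite normrN; split=> //; apply/eqP.
  by rewrite det_laurent_eq0 ?opprK ?normrN.
have part_c : detP0 -> eigenvalue J 1.
  by case/circle => nu; apply: eigenvalue_kron_conj1.
have part_d : spec_rad_le A 1 -> eigenvalue J 1 -> detP0.
  move=> rhoA J1; apply/circle.
  by apply: (kron_conj_unimodular_eigenvalue rhoA J1); rewrite normr1.
have circle_rho : spec_rad_le A 1 -> (detP0 <-> spec_rad_eq J 1).
  move=> rhoA; split=> [/part_c J1 | [_ [l J_l norm_l]]].
    by split; [apply: spec_rad_le_kron_conj | exists 1; rewrite ?normr1].
  by apply/circle; apply: (kron_conj_unimodular_eigenvalue rhoA J_l).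
split=> //.
- split; last by rewrite /P1 ctrmxM ctrmxK mulmxK ?unitmx_ctrmx.
  by rewrite /g P1_Xbar /A /P1 -mulmxA mulKmx // /P0 addrK.
- exists (fun E => ctrmx P1 *m invmx Xbar *m E *m invmx Xbar *m P1); split.
    exact: frechet_deriv_invmx_sandwich.
  by move=> E; rewrite P1_Xbar -mulmxA Xbar_P1 kron_conj_vec.
- move=> rhoA; split; first exact: circle_rho.
  rewrite -eigenvalue1_unitmx -circle_rho //.
  by split; [apply: part_c | apply: part_d].
Qed.
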